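(* If $X$ is a homogeneous ordered compactum, then $\chi_K Nt(X)=\omega$.
   Context: An ordered compactum is a compact space whose topology is the order topology of a linear order. Families of open sets are ordered by inclusion; a family is $\kappa^{\mathrm{op}}$-like if no member is contained in $\kappa$-many members. For $E\subseteq X$, $\chi Nt(E,X)$ is the least $\kappa\geq\omega$ such that $E$ has a $\kappa^{\mathrm{op}}$-like neighborhood base (family of open sets containing $E$ such that every open set containing $E$ contains a member); $\chi_K Nt(X)$ is the supremum of $\chi Nt(K,X)$ over compact $K\subseteq X$. *)

From HB Require Import structures.
From mathcomp Require Import all_boot all_order all_algebra.
From mathcomp Require Import all_classical all_reals all_analysis.

Set Implicit Arguments.
Unset Strict Implicit.
Unset Printing Implicit Defensive.

Local Open Scope classical_set_scope.

(* Cardinals are represented by types: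
   a cardinal kappa is given as a type K with |K| = kappa. *)

Definition homogeneous (X : topologicalType) : Prop :=
  forall x y : X, exists (f g : X -> X),
    continuous f /\ continuous g /\ cancel f g /\ cancel g f /\ f x = y.

Definition op_like (X : Type) (K : Type) (F : set (set X)) : Prop :=
  forall U, F U -> ~ ([set: K] #<= [set V | F V /\ U `<=` V])%card.

Definition nbhd_base (X : topologicalType) (E : set X) (F : set (set X)) : Prop :=
  (forall U, F U -> open U /\ E `<=` U) /\
  (forall W, open W -> E `<=` W -> exists2 U, F U & U `<=` W).

(* chiNt(E, X) <= |K|  (for infinite K): E has a |K|^op-like neighborhood base *)
Definition chiNt_le (X : topologicalType) (K : Type) (E : set X) : Prop :=
  exists F : set (set X), nbhd_base E F /\ op_like K F.

Definition chiKNt_le (X : topologicalType) (K : Type) : Prop :=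
  forall C : set X, compact C -> chiNt_le K C.

From HB Require Import structures.
From mathcomp Require Import all_boot all_order all_algebra.
From mathcomp Require Import all_classical all_reals all_analysis.
From mathcomp Require Import finmap.
Import Order.TTheory.
Local Open Scope order_scope.
Local Open Scope classical_set_scope.

(* Homogeneity makes every point of X first countable: either every point is
   isolated, or the minimum m of X is not isolated.  In the latter case a
   strictly decreasing sequence above m has a cluster point y outside its
   range, and a homeomorphism sending y to m carries the sequence to points
   accumulating at m from the right; since m has only right neighbourhoods,
   these give a countable base at m.  Consequently each point a is the limit
   of a non-increasing sequence P a n from the right and of a non-decreasing
   sequence Q a n from the left.
   Let C be compact.  Its complement is the disjoint union of its gaps, the
   open intervals ]a, b[ with ends in C (or infinite).  The sets
   X \ U_{]a,b[ in G} [P a n, Q b n], for G a finite set of gaps and n a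
   natural number, contain C; they form a neighbourhood base of C because
   X \ W is compact for open W containing C, hence covered by finitely many
   gaps, each of which meets X \ W inside [P a n, Q b n] for large n.  Since
   a point lies in at most one gap, such a set is contained in another one of
   the family only if the latter is given by a subset of G and some m <= n:
   every member has finitely many supersets in the family. *)

(* [compact_cover] is stated for pointed spaces; a point of [A] provides one. *)
Lemma compact_cover_compact {T : topologicalType} {A : set T} :
  compact A -> A !=set0 -> cover_compact A.
Proof.
move=> cA [x0 _].
pose pT := HB.pack_for ptopologicalType T (isPointed.Build T x0).
by move: cA; change (@compact pT A -> @cover_compact pT A); rewrite compact_cover.
Qed.

Definition first_countable_at {T : topologicalType} (x : T) :=
  exists B : nat -> set T,
    (forall n, nbhs x (B n)) /\ (forall W, nbhs x W -> exists n, B n `<=` W).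

Lemma first_countable_homeo {T U : topologicalType} {f : T -> U} {g : U -> T} {x : T} :
  continuous f -> continuous g -> cancel f g -> cancel g f ->
  first_countable_at x -> first_countable_at (f x).
Proof.
move=> cf cg fK gK [B [Bx Bbase]]; exists (fun n => f @` B n); split.
  move=> n; have Bgfx : nbhs (g (f x)) (B n) by rewrite fK.
  have : nbhs (f x) (g @^-1` B n) by exact: cg.
  by apply: filterS => z Bgz; exists (g z).
move=> W /cf /Bbase [n BW]; exists n => _ [z Bz <-]; exact: BW.
Qed.

Lemma first_countable_isolated {T : topologicalType} {x : T} :
  nbhs x [set x] -> first_countable_at x.
Proof.
move=> xi; exists (fun=> [set x]); split => // W Wx.
by exists 0%N => _ ->; exact: nbhs_singleton.
Qed.

Section OrderCompact.
Context {d : Order.disp_t} {X : orderTopologicalType d}.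
Implicit Types (A W : set X) (x y : X).

Lemma rray_nbhs {x y} : x < y -> nbhs y `]x, +oo[.
Proof.
by move=> xy; apply: open_nbhs_nbhs; split; [exact: rray_open|rewrite /= in_itv /= xy].
Qed.

Lemma lray_nbhs {x y} : y < x -> nbhs y `]-oo, x[.
Proof.
by move=> yx; apply: open_nbhs_nbhs; split; [exact: lray_open|rewrite /= in_itv /= yx].
Qed.

Lemma compact_min A : compact A -> A !=set0 ->
  exists2 m, A m & forall a, A a -> m <= a.
Proof.
move=> cA [a0 Aa0].
pose F := filter_from A (fun a => A `&` `]-oo, a]).
have FF : ProperFilter F.
  apply: filter_from_proper => [|a Aa]; last first.
    by exists a; split => //; rewrite /= in_itv /=.
  apply: filter_from_filter => [|a b Aa Ab]; first by exists a0.
  exists (Order.min a b); first by rewrite minEle; case: (a <= b).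
  move=> x [Ax]; rewrite /= in_itv /= le_min => /andP[xa xb].
  by split; split; rewrite //= in_itv /= ?xa ?xb.
have [m [Am clm]] := cA F FF (ex_intro2 _ _ a0 Aa0 (@subIsetl _ _ _)).
exists m => // a Aa; rewrite leNgt; apply/negP => am.
have [x [[_]]] := clm _ _ (ex_intro2 _ _ a Aa (@subset_refl _ _)) (rray_nbhs am).
by rewrite /= !in_itv /= andbT => xa /(le_lt_trans xa); rewrite ltxx.
Qed.

Lemma compact_max A : compact A -> A !=set0 ->
  exists2 m, A m & forall a, A a -> a <= m.
Proof.
move=> cA [a0 Aa0].
pose F := filter_from A (fun a => A `&` `[a, +oo[).
have FF : ProperFilter F.
  apply: filter_from_proper => [|a Aa]; last first.
    by exists a; split => //; rewrite /= in_itv /= lexx.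
  apply: filter_from_filter => [|a b Aa Ab]; first by exists a0.
  exists (Order.max a b); first by rewrite maxEle; case: (a <= b).
  move=> x [Ax]; rewrite /= in_itv /= andbT ge_max => /andP[ax bx].
  by split; split; rewrite //= in_itv /= ?ax ?bx.
have [m [Am clm]] := cA F FF (ex_intro2 _ _ a0 Aa0 (@subIsetl _ _ _)).
exists m => // a Aa; rewrite leNgt; apply/negP => ma.
have [x [[_]]] := clm _ _ (ex_intro2 _ _ a Aa (@subset_refl _ _)) (lray_nbhs ma).
by rewrite /= !in_itv /= andbT => ax /(le_lt_trans ax); rewrite ltxx.
Qed.

Lemma nbhs_right_itv x W : nbhs x W ->
  (exists2 v, x < v & forall z, x <= z -> z < v -> W z) \/ (forall z, x <= z -> W z).
Proof.
rewrite itv_nbhsE => -[i [oi xi] iW].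
case: i oi xi iW => [[[]l|[]] [[]r|[]]] //= oi xi iW.
all: rewrite /itv_open_ends /= in oi; try by [].
all: rewrite ?in_itv /= ?andbT in xi.
- case/andP: xi => lx xr; left; exists r => // z xz zr; apply: iW.
  by rewrite /= in_itv /= zr (lt_le_trans lx xz).
- right => z xz; apply: iW.
  by rewrite /= in_itv /= andbT (lt_le_trans xi xz).
- by left; exists r => // z xz zr; apply: iW; rewrite /= in_itv /= zr.
- by right => z _; apply: iW; rewrite /= in_itv.
Qed.

Lemma nbhs_left_itv x W : nbhs x W ->
  (exists2 v, v < x & forall z, z <= x -> v < z -> W z) \/ (forall z, z <= x -> W z).
Proof.
rewrite itv_nbhsE => -[i [oi xi] iW].
case: i oi xi iW => [[[]l|[]] [[]r|[]]] //= oi xi iW.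
all: rewrite /itv_open_ends /= in oi; try by [].
all: rewrite ?in_itv /= ?andbT in xi.
- case/andP: xi => lx xr; left; exists l => // z zx lz; apply: iW.
  by rewrite /= in_itv /= lz (le_lt_trans zx xr).
- by left; exists l => // z zx lz; apply: iW; rewrite /= in_itv /= lz.
- right => z zx; apply: iW.
  by rewrite /= in_itv /= (le_lt_trans zx xi).
- by right => z _; apply: iW; rewrite /= in_itv.
Qed.

Lemma first_countable_bottom (o : X) (t : nat -> X) :
  (forall x, o <= x) -> (forall n, o < t n) ->
  (forall v, o < v -> exists n, t n < v) -> first_countable_at o.
Proof.
move=> omin ot tv; exists (fun n => `]-oo, t n[); split.
  by move=> n; exact: lray_nbhs.
move=> W /nbhs_right_itv [[v ov vW]|oW]; last by exists 0%N => z _; exact: oW.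
have [n tnv] := tv v ov; exists n => z; rewrite /= in_itv /= => ztn.
by apply: vW; [exact: omin|exact: lt_trans ztn tnv].
Qed.

Lemma cluster_decreasing_notin {s : nat -> X} {y} :
  (forall n, s n.+1 < s n) -> cluster (s @ \oo) y -> forall n, s n <> y.
Proof.
move=> sdec cly k sky.
have anti : nonincreasing_seq s by apply/nonincreasing_seqP => n; exact: ltW.
have [z [/= zs]] : [set z | z <= s k.+1] `&` `]s k.+1, +oo[ !=set0.
  apply: cly; last by rewrite -sky; exact: rray_nbhs.
  by exists k.+1 => // m /= /anti.
by rewrite in_itv /= andbT => /(le_lt_trans zs); rewrite ltxx.
Qed.

Lemma first_countable_homogeneous :
  compact [set: X] -> homogeneous X -> forall x : X, first_countable_at x.
Proof.
move=> cX hom x.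
suff [z fcz] : exists z : X, first_countable_at z.
  have [f [g [cf [cg [fK [gK <-]]]]]] := hom z x.
  exact: first_countable_homeo cf cg fK gK fcz.
have [[z zi]|noiso] := pselect (exists z : X, nbhs z [set z]).
  by exists z; exact: first_countable_isolated.
have [m _ mmin] := compact_min _ cX (ex_intro _ x I).
have right_of_m V : nbhs m V -> exists2 w, m < w & V w.
  move=> mV; apply: contrapT => noV; apply: noiso; exists m.
  apply: filterS mV => w Vw; apply/eqP; rewrite eq_le (mmin w I) andbT leNgt.
  by apply/negP => mw; apply: noV; exists w.
have [v0 mv0 _] := right_of_m _ filterT.
have between v : exists w, m < v -> m < w /\ w < v.
  have [mv|nmv] := pselect (m < v); last by exists m => /nmv.
  have [w mw] := right_of_m _ (lray_nbhs mv).
  by rewrite /= in_itv /= => wv; exists w.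
have [nxt nxtP] := choice between.
pose s n := iter n nxt v0.
have ms n : m < s n by elim: n => //= n IH; case: (nxtP _ IH).
have sdec n : s n.+1 < s n by case: (nxtP _ (ms n)).
have [y [_ cly]] := cX (s @ \oo) _ filterT.
have [f [g [cf [cg [fK [gK fyo]]]]]] := hom y m.
exists m; apply: (@first_countable_bottom m (f \o s)) => [z|n|v mv]; first exact: mmin.
  rewrite lt_neqAle mmin // andbT; apply/eqP => mfs.
  by apply: (cluster_decreasing_notin sdec cly n); apply: (can_inj fK); rewrite fyo mfs.
have : nbhs y (f @^-1` `]-oo, v[) by apply: cf; rewrite fyo; exact: lray_nbhs.
have s_range : (s @ \oo) (range s) by exists 0%N => // k _; exists k.
by move=> /(cly _ _ s_range) [_ [[n _ <-]]]; rewrite /= in_itv /=; exists n.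
Qed.

(* The positivity clauses are conditional so that every point, including a
   maximum or a minimum, admits such sequences. *)
Definition right_approx (a : X) (P : nat -> X) :=
  [/\ nonincreasing_seq P, forall n y, a < y -> a < P n &
      forall y, a < y -> exists n, P n <= y].

Definition left_approx (b : X) (Q : nat -> X) :=
  [/\ nondecreasing_seq Q, forall n y, y < b -> Q n < b &
      forall y, y < b -> exists n, y <= Q n].

Lemma first_countable_right_approx {a} : first_countable_at a ->
  exists P, right_approx a P.
Proof.
move=> [B [Ba Bbase]].
have [[y0 ay0]|top] := pselect (exists y, a < y); last first.
  by exists (fun=> a); split => // [n y|y] ay; exfalso; apply: top; exists y.
have [[v [av vmin]]|dense] := pselect (exists v, a < v /\ forall y, a < y -> v <= y).
  by exists (fun=> v); split => // y /vmin vy; exists 0%N.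
have inB n : exists z, a < z /\ B n z.
  case/nbhs_right_itv: (Ba n) => [[v av vB]|aB]; last first.
    by exists y0; split => //; apply: aB; exact: ltW.
  have [z [az zv]] : exists z, a < z /\ z < v.
    apply: contrapT => nz; apply: dense; exists v; split => // y ay.
    by rewrite leNgt; apply/negP => yv; apply: nz; exists y.
  by exists z; split => //; apply: vB => //; exact: ltW.
have [z zP] := choice inB.
pose P := fix P n := if n is k.+1 then Order.min (P k) (z k.+1) else z 0.
have Pz n : P n <= z n by case: n => //= n; rewrite ge_min lexx orbT.
exists P; split.
- by apply/nonincreasing_seqP => n; rewrite /= ge_min lexx.
- move=> n _ _; elim: n => [|n IH] /=; first by case: (zP 0%N).
  by rewrite lt_min IH; case: (zP n.+1).
- move=> y ay; have [n By] := Bbase _ (lray_nbhs ay); exists n.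
  apply: le_trans (Pz n) _; case: (zP n) => _ /By.
  by rewrite /= in_itv /= => /ltW.
Qed.

Lemma first_countable_left_approx {b} : first_countable_at b ->
  exists Q, left_approx b Q.
Proof.
move=> [B [Bb Bbase]].
have [[y0 y0b]|bot] := pselect (exists y, y < b); last first.
  by exists (fun=> b); split => // [n y|y] yb; exfalso; apply: bot; exists y.
have [[v [vb vmax]]|dense] := pselect (exists v, v < b /\ forall y, y < b -> y <= v).
  by exists (fun=> v); split => // y /vmax yv; exists 0%N.
have inB n : exists z, z < b /\ B n z.
  case/nbhs_left_itv: (Bb n) => [[v vb vB]|bB]; last first.
    by exists y0; split => //; apply: bB; exact: ltW.
  have [z [vz zb]] : exists z, v < z /\ z < b.
    apply: contrapT => nz; apply: dense; exists v; split => // y yb.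
    by rewrite leNgt; apply/negP => vy; apply: nz; exists y.
  by exists z; split => //; apply: vB => //; exact: ltW.
have [z zP] := choice inB.
pose Q := fix Q n := if n is k.+1 then Order.max (Q k) (z k.+1) else z 0.
have zQ n : z n <= Q n by case: n => //= n; rewrite le_max lexx orbT.
exists Q; split.
- by apply/nondecreasing_seqP => n; rewrite /= le_max lexx.
- move=> n _ _; elim: n => [|n IH] /=; first by case: (zP 0%N).
  by rewrite gt_max IH; case: (zP n.+1).
- move=> y yb; have [n By] := Bbase _ (rray_nbhs yb); exists n.
  apply: le_trans (zQ n); case: (zP n) => _ /By.
  by rewrite /= in_itv /= andbT => /ltW.
Qed.

Lemma right_approx_compact {a P K} : right_approx a P -> compact K -> ~ K a ->
  \forall n \near \oo, forall y, K y -> a < y -> P n <= y.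
Proof.
move=> [Pdec _ Papp] cK Ka.
have [[y [Ky ay]]|none] := pselect (exists y, K y /\ a < y); last first.
  by apply: nearW => n y Ky ay; exfalso; apply: none; exists y.
have [|m [Km am] mmin] := compact_min _ (compact_closedI cK (@rray_closed _ _ a)).
  by exists y; split => //; rewrite /= in_itv /= andbT ltW.
move: am; rewrite /= in_itv /= andbT le_eqVlt => /orP[/eqP am|am].
  by rewrite -am in Km.
have [n0 Pm] := Papp _ am; exists n0 => // n /= n0n z Kz az.
apply: le_trans (Pdec _ _ n0n) (le_trans Pm (mmin z _)).
by split => //; rewrite /= in_itv /= andbT ltW.
Qed.

Lemma left_approx_compact {b Q K} : left_approx b Q -> compact K -> ~ K b ->
  \forall n \near \oo, forall y, K y -> y < b -> y <= Q n.
Proof.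
move=> [Qinc _ Qapp] cK Kb.
have [[y [Ky yb]]|none] := pselect (exists y, K y /\ y < b); last first.
  by apply: nearW => n y Ky yb; exfalso; apply: none; exists y.
have [|m [Km mb] mmax] := compact_max _ (compact_closedI cK (@lray_closed _ _ b)).
  by exists y; split => //; rewrite /= in_itv /= ltW.
move: mb; rewrite /= in_itv /= le_eqVlt => /orP[/eqP mb|mb].
  by rewrite mb in Km.
have [n0 mQ] := Qapp _ mb; exists n0 => // n /= n0n z Kz zb.
apply: le_trans (le_trans (mmax z _) mQ) (Qinc _ _ n0n).
by split => //; rewrite /= in_itv /= ltW.
Qed.

(* Interval ends are encoded as [option X], [None] being an infinite end. *)
Definition above (a : option X) : set X :=
  if a is Some a then [set x | a < x] else setT.
Definition below (b : option X) : set X :=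
  if b is Some b then [set x | x < b] else setT.
Definition span (g : option X * option X) := above g.1 `&` below g.2.

Definition gap (C : set X) g := [/\ forall a, g.1 = Some a -> C a,
  forall b, g.2 = Some b -> C b, forall c, C c -> ~ span g c & span g !=set0].

Lemma span_open g : open (span g).
Proof.
apply: openI; [case: g.1 => [a|] /=|case: g.2 => [b|] /=]; try exact: openT.
- have -> : [set x | a < x] = `]a, +oo[.
    by apply/seteqP; split => x; rewrite /= in_itv /= andbT.
  exact: rray_open.
- have -> : [set x | x < b] = `]-oo, b[.
    by apply/seteqP; split => x; rewrite /= in_itv.
  exact: lray_open.
Qed.

Definition lower_end (C : set X) x (a : option X) := [/\ above a x,
  forall a', a = Some a' -> C a' & forall c, C c -> c < x -> ~ above a c].
Definition upper_end (C : set X) x (b : option X) := [/\ below b x,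
  forall b', b = Some b' -> C b' & forall c, C c -> x < c -> ~ below b c].

Lemma lower_end_unique {C x a a'} : lower_end C x a -> lower_end C x a' -> a = a'.
Proof.
case: a a' => [a|] [a'|] [/= ax Ca aC] [/= a'x Ca' a'C] //.
- congr Some; apply/le_anti.
  rewrite !leNgt; apply/andP; split; apply/negP.
    exact: a'C (Ca _ erefl) ax.
  exact: aC (Ca' _ erefl) a'x.
- by case: (a'C a (Ca a erefl) ax).
- by case: (aC a' (Ca' a' erefl) a'x).
Qed.

Lemma upper_end_unique {C x b b'} : upper_end C x b -> upper_end C x b' -> b = b'.
Proof.
case: b b' => [b|] [b'|] [/= xb Cb bC] [/= xb' Cb' b'C] //.
- congr Some; apply/le_anti.
  rewrite !leNgt; apply/andP; split; apply/negP.
    exact: bC (Cb' _ erefl) xb'.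
  exact: b'C (Cb _ erefl) xb.
- by case: (b'C b (Cb b erefl) xb).
- by case: (bC b' (Cb' b' erefl) xb').
Qed.

Lemma gap_ends {C g x} : gap C g -> span g x ->
  lower_end C x g.1 /\ upper_end C x g.2.
Proof.
case: g => [a b] [/= Ca Cb Cspan _] [/= xa xb]; split; split => // c Cc.
- move=> cx ac; apply: (Cspan c Cc); split => //.
  by case: b {Cb Cspan} xb => //= b xb; exact: lt_trans cx xb.
- move=> xc cb; apply: (Cspan c Cc); split => //.
  by case: a {Ca Cspan} xa => //= a ax; exact: lt_trans ax xc.
Qed.

Lemma gap_unique {C g g' x} : gap C g -> gap C g' -> span g x -> span g' x -> g = g'.
Proof.
move=> gC g'C /(gap_ends gC) [lo hi] /(gap_ends g'C) [lo' hi'].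
by rewrite [g]surjective_pairing [g']surjective_pairing
  (lower_end_unique lo lo') (upper_end_unique hi hi').
Qed.

Lemma lower_end_exists {C x} : compact C -> ~ C x -> exists a, lower_end C x a.
Proof.
move=> cC Cx.
have [[c [Cc cx]]|none] := pselect (exists c, C c /\ c < x); last first.
  by exists None; split => // c Cc cx _; apply: none; exists c.
have [|m [Cm mx] mmax] := compact_max _ (compact_closedI cC (@lray_closed _ _ x)).
  by exists c; split => //; rewrite /= in_itv /= ltW.
move: mx; rewrite /= in_itv /= le_eqVlt => /orP[/eqP mx|mx].
  by rewrite mx in Cm.
exists (Some m); split => //= [_ [<-] //|c' Cc' c'x mc'].
have : c' <= m by apply: mmax; split => //; rewrite /= in_itv /= ltW.
by rewrite leNgt mc'.
Qed.

Lemma upper_end_exists {C x} : compact C -> ~ C x -> exists b, upper_end C x b.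
Proof.
move=> cC Cx.
have [[c [Cc xc]]|none] := pselect (exists c, C c /\ x < c); last first.
  by exists None; split => // c Cc xc _; apply: none; exists c.
have [|m [Cm xm] mmin] := compact_min _ (compact_closedI cC (@rray_closed _ _ x)).
  by exists c; split => //; rewrite /= in_itv /= andbT ltW.
move: xm; rewrite /= in_itv /= andbT le_eqVlt => /orP[/eqP xm|xm].
  by rewrite -xm in Cm.
exists (Some m); split => //= [_ [<-] //|c' Cc' xc' c'm].
have : m <= c' by apply: mmin; split => //; rewrite /= in_itv /= andbT ltW.
by rewrite leNgt c'm.
Qed.

Lemma gap_exists {C x} : compact C -> ~ C x -> exists2 g, gap C g & span g x.
Proof.
move=> cC Cx.
have [a [xa Ca aC]] := lower_end_exists cC Cx.
have [b [xb Cb bC]] := upper_end_exists cC Cx.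
exists (a, b) => //; split => //; last by exists x.
move=> c Cc [/= ac cb]; have [cx|xc|cxe] := ltgtP c x.
- exact: aC Cc cx ac.
- exact: bC Cc xc cb.
- by rewrite cxe in Cc.
Qed.

End OrderCompact.

Section GapNeighbourhoods.
Context {d : Order.disp_t} {X : orderTopologicalType d}.
Variables (C : set X) (P Q : X -> nat -> X).
Hypotheses (hP : forall a, right_approx a (P a)) (hQ : forall b, left_approx b (Q b)).

Definition lower_core (a : option X) n : set X :=
  if a is Some a then [set y | P a n <= y] else setT.
Definition upper_core (b : option X) n : set X :=
  if b is Some b then [set y | y <= Q b n] else setT.
Definition core (g : option X * option X) n := lower_core g.1 n `&` upper_core g.2 n.
Definition cores (G : {fset option X * option X}) n := \bigcup_(g in [set` G]) core g n.
Definition gap_nbhds := [set U | exists G n,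
  (forall g, g \in G -> gap C g) /\ U = ~` cores G n].

Lemma core_closed g n : closed (core g n).
Proof.
apply: closedI; [case: g.1 => [a|] /=|case: g.2 => [b|] /=]; try exact: closedT.
- have -> : [set y | P a n <= y] = `[P a n, +oo[.
    by apply/seteqP; split => y; rewrite /= in_itv /= andbT.
  exact: rray_closed.
- have -> : [set y | y <= Q b n] = `]-oo, Q b n].
    by apply/seteqP; split => y; rewrite /= in_itv.
  exact: lray_closed.
Qed.

Lemma core_mono {g n m} : (n <= m)%N -> core g n `<=` core g m.
Proof.
move=> nm y [lo hi]; split.
  by case: g.1 lo => [a|] //= /(le_trans _); apply; case: (hP a) => + _ _; apply.
by case: g.2 hi => [b|] //= /le_trans; apply; case: (hQ b) => + _ _; apply.
Qed.

Lemma core_span {g n} : gap C g -> core g n `<=` span g.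
Proof.
case=> _ _ _ [x [xa xb]] y [lo hi]; split.
  case: g.1 xa lo => [a|] //= ax; apply: lt_le_trans.
  by case: (hP a) => _ + _; apply; exact: ax.
case: g.2 xb hi => [b|] //= xb; move/le_lt_trans; apply.
by case: (hQ b) => _ + _; apply; exact: xb.
Qed.

Lemma core_eventually {g K} : gap C g -> compact K -> (forall x, K x -> ~ C x) ->
  \forall n \near \oo, K `&` span g `<=` core g n.
Proof.
case=> Ca Cb _ _ cK KC.
have lo : \forall n \near \oo, forall y, K y -> above g.1 y -> lower_core g.1 n y.
  case E: g.1 => [a|]; last exact: nearW.
  have := right_approx_compact (hP a) cK (fun Ka => KC a Ka (Ca a E)).
  by apply: filterS => n h y Ky /= ay; exact: h.
have hi : \forall n \near \oo, forall y, K y -> below g.2 y -> upper_core g.2 n y.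
  case E: g.2 => [b|]; last exact: nearW.
  have := left_approx_compact (hQ b) cK (fun Kb => KC b Kb (Cb b E)).
  by apply: filterS => n h y Ky /= yb; exact: h.
by near=> n => y [Ky [ay yb]]; split; [exact: (near lo n)|exact: (near hi n)].
Unshelve. all: by end_near.
Qed.

Lemma gap_nbhds_base : compact [set: X] -> compact C -> nbhd_base C gap_nbhds.
Proof.
move=> cX cC; split.
  move=> U [G [n [Ggap ->]]]; split.
    by rewrite openC; apply: closed_bigcup => // g _; exact: core_closed.
  move=> c Cc [g Gg /(core_span (Ggap g Gg))].
  by case: (Ggap g Gg) => _ _ /(_ c Cc).
move=> W oW CW.
have cK : compact (~` W) by apply: (subclosed_compact _ cX) => //; rewrite closedC.
have KC x : (~` W) x -> ~ C x by move=> Wx /CW.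
have [[k0 Wk0]|Kempty] := pselect (~` W !=set0); last first.
  exists (~` cores fset0 0); first by exists fset0, 0%N.
  by move=> x _; apply: contrapT => Wx; apply: Kempty; exists x.
have [G GS Kcover] : finite_subset_cover (gap C) span (~` W).
  apply: (compact_cover_compact cK (ex_intro _ k0 Wk0)) => [g _|x Kx].
    exact: span_open.
  by have [g] := gap_exists cC (KC x Kx); exists g.
have Ggap g : g \in G -> gap C g by move/GS; rewrite in_setE.
have ev g : g \in G -> \forall n \near \oo, ~` W `&` span g `<=` core g n.
  by move=> Gg; exact: core_eventually (Ggap g Gg) cK KC.
have : \forall n \near \oo, forall g, g \in G -> ~` W `&` span g `<=` core g n.
  by apply: filterS (filter_bigI eventually_filter ev) => n Gn g Gg; exact: Gn g Gg.
move=> [n _ /(_ n (leqnn n)) coreW].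
exists (~` cores G n); first by exists G, n.
move=> x Gx; apply: contrapT => Wx; apply: Gx.
by have [g Gg gx] := Kcover x Wx; exists g => //; exact: coreW.
Qed.

Lemma cores_superset {G n G' m} :
  (forall g, g \in G -> gap C g) -> (forall g, g \in G' -> gap C g) ->
  cores G' m `<=` cores G n -> cores G' m = cores (G' `&` G)%fset (minn m n).
Proof.
move=> Ggap G'gap G'G; apply/seteqP; split => x.
  move=> [g G'g gx]; have [h Gh hx] := G'G x (ex_intro2 _ _ g G'g gx).
  have gh : g = h.
    have G'g_gap := G'gap g G'g; have Gh_gap := Ggap h Gh.
    exact: gap_unique G'g_gap Gh_gap (core_span G'g_gap _ gx) (core_span Gh_gap _ hx).
  subst h; exists g; first by rewrite /= inE G'g Gh.
  by rewrite /minn; case: ifP.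
move=> [g]; rewrite /= inE => /andP[G'g _] gx; exists g => //.
exact: core_mono (geq_minl m n) _ gx.
Qed.

Lemma gap_nbhds_op_like : op_like nat gap_nbhds.
Proof.
move=> U [G [n [Ggap ->]]]; apply/finite_setPn.
apply: (sub_finite_set _ (finite_image2 (fun H k => ~` cores H k)
  (finite_fset (fpowerset G)) (finite_II n.+1))).
move=> V [[G' [m [G'gap ->]]] UV].
exists (G' `&` G)%fset; first by rewrite /= fpowersetE fsubsetIr.
exists (minn m n); first by rewrite /= ltnS geq_minr.
by rewrite (cores_superset Ggap G'gap (subsetC2 UV)).
Qed.

End GapNeighbourhoods.

Theorem theorem2p32 (d : Order.disp_t) (X : orderTopologicalType d) :
  compact [set: X] -> homogeneous X -> chiKNt_le X nat.
Proof.
move=> cX hom C cC.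
have fcX := first_countable_homogeneous cX hom.
have [P hP] := choice (fun a => first_countable_right_approx (fcX a)).
have [Q hQ] := choice (fun b => first_countable_left_approx (fcX b)).
exists (gap_nbhds C P Q); split; first exact: gap_nbhds_base.
exact: gap_nbhds_op_like.
Qed.
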